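(* For all integers $n\ge2$, $$B_R(n):=\sum_{1<p\le\sqrt n}\frac{n-1}{p-1}d_p(n)\log p\le 4\,n^{3/2},$$ where the sum is over primes $p\le\sqrt n$.
   Context: For a prime $p$, $d_p(n)$ is the sum of the base-$p$ digits of the integer $n$. *)

From Stdlib Require Import Reals Arith Lia ZArith Znumtheory.
Open Scope R_scope.

(* Sum of base-p digits of n, computed with fuel (fuel = n suffices for p >= 2). *)
Fixpoint digit_sum_aux (fuel p n : nat) : nat :=
  match fuel with
  | O => O
  | S f => match n with
           | O => O
           | _ => (n mod p + digit_sum_aux f p (n / p))%nat
           end
  end.

Definition digit_sum (p n : nat) : nat := digit_sum_aux n p n.

Definition is_prime (p : nat) : Prop := prime (Z.of_nat p).

(* B_R(n) = sum over primes p with p <= sqrt n of (n-1)/(p-1) * d_p(n) * log p.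
   For integer p, p <= sqrt n  <->  p*p <= n. *)
Definition B_R_term (n p : nat) : R :=
  if (Z.of_nat p * Z.of_nat p <=? Z.of_nat n)%Z then
    if prime_dec (Z.of_nat p) then
      (INR n - 1) / (INR p - 1) * INR (digit_sum p n) * ln (INR p)
    else 0
  else 0.

(* Sum over p = 0 .. n (all primes p <= sqrt n are <= n). *)
Definition B_R (n : nat) : R := sum_f_R0 (B_R_term n) n.

From Stdlib Require Import Reals Lia Lra ZArith Znumtheory List.
From mathcomp Require ssreflect ssrfun ssrbool eqtype ssrnat div prime bigop binomial zify.
Import ListNotations.

(* For a prime p <= sqrt n the base-p digits of n give d_p(n) <= (p-1) * #digits_p(n) and
   d_p(n) <= 2(p-1) + n/p^2, so B_R(n) <= (n-1) * sum_{p <= sqrt n} log p * h_n(p), where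
   h_n(j) = min(#digits_j(n), 2 + floor(n/j^2)/(j-1)) is nonincreasing in j.  Chebyshev's bound
   prod_{p <= t} p <= 4^(t-1), which comes from the central binomial coefficient, turns this by
   Abel summation into B_R(n) <= (n-1) log 4 * S(n) with S(n) = sum_{2 <= j <= sqrt n} h_n(j).

   For n >= 2^28 take c = sqrt n / (2 log2 n): the terms with j <= c are at most log2 n + 1 and
   those with j > c telescope, so S(n) <= 2.88 sqrt n, and 2.88 log 4 < 4.  Since S(n) is
   nondecreasing in n, each interval [N, N'] of a finite cover of [1768, 2^28) is settled by
   an integer upper bound for S(N').  Below 1768 that estimate is too weak, and B_R(n) itself
   is bounded in integer arithmetic, using log p <= ceil(log2 p) log 2 and log 2 <= 0.6935. *)

(** * Chebyshev's bound *)

Fixpoint primorial (t : nat) : nat :=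
  match t with
  | O => 1
  | S t' => ((if prime_dec (Z.of_nat t) then t else 1) * primorial t')%nat
  end.

Module Chebyshev.
Import ssreflect ssrfun ssrbool eqtype ssrnat div prime bigop binomial zify.
Local Open Scope nat_scope.

Lemma dvdn_Zdivide d m : d %| m <-> (Z.of_nat d | Z.of_nat m)%Z.
Proof.
split=> [/dvdnP [k ->]|[k hk]]; first by exists (Z.of_nat k); lia.
have [d0|d_gt0] := posnP d; first by rewrite d0 /= in hk; have -> : m = 0%N by lia.
by apply/dvdnP; exists (Z.to_nat k); nia.
Qed.

Lemma primeZ p : prime p <-> Znumtheory.prime (Z.of_nat p).
Proof.
rewrite -prime_alt /prime'; split.
- case/primeP=> p_gt1 dvd_p; split=> [|d hd /[dup] d_p]; first lia.
  rewrite -(Z2Nat.id d) in d_p; last lia.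
  by move/dvdn_Zdivide/dvd_p/orP: d_p => [] /eqP; lia.
- case=> p_gt1 no_dvd; apply/primeP; split=> [|d /[dup] d_p /dvdn_Zdivide d_pZ]; first lia.
  have d_gt0 : 0 < d by case: (posnP d) d_p => // ->; rewrite dvd0n; lia.
  have d_le_p : d <= p by apply: dvdn_leq; lia.
  apply/orP; have [d1|d_gt1] := leqP d 1; first by left; apply/eqP; lia.
  have [d_lt_p|d_ge_p] := ltnP d p; first by case: (no_dvd (Z.of_nat d) _ d_pZ); lia.
  by right; apply/eqP; lia.
Qed.

Lemma prime_dvd_fact p m : prime p -> p %| m`! -> p <= m.
Proof.
move=> p_pr; elim: m => [|m IHm]; first by rewrite fact0 dvdn1 => /eqP p1; rewrite p1 in p_pr.
by rewrite factS Euclid_dvdM // => /orP [/dvdn_leq -> //|/IHm]; lia.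
Qed.

Lemma prod_primes_dvd a b m :
  (forall p, prime p -> a <= p < b -> p %| m) ->
  \prod_(a <= p < b | prime p) p %| m.
Proof.
elim: b => [|b IHb] dvd_m; first by rewrite big_geq.
have [ab|ba] := leqP a b; last by rewrite big_geq.
rewrite big_mkcond big_nat_recr //= -big_mkcond.
have IH : \prod_(a <= p < b | prime p) p %| m.
  by apply: IHb => p p_pr /andP [ap pb]; apply: dvd_m; rewrite // ap /=; lia.
case b_pr: (prime b); last by rewrite muln1.
rewrite Gauss_dvd ?IH ?dvd_m ?ab //= coprime_sym prime_coprime //.
rewrite big_nat_cond; apply/negP; elim/big_rec: _ => [|i x /andP [/andP [_ ib] i_pr] IHx];
  first by rewrite dvdn1; case: eqP b_pr => // ->.
by rewrite Euclid_dvdM // dvdn_prime2 // => /orP [/eqP bi|//]; lia.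
Qed.

Lemma bin_central_le k : 'C(k.*2.+1, k) <= 4 ^ k.
Proof.
elim: k => [//|k IHk].
have := mul_bin_diag k.*2.+3 k; have := mul_bin_diag k.*2.+2 k.
have := mul_bin_left k.*2.+2 k; rewrite doubleS expnS /=.
have -> : k.*2.+2 - k = k.+2 by lia.
nia.
Qed.

Lemma prime_dvd_bin_central k p :
  prime p -> k.+2 <= p < k.*2.+2 -> p %| 'C(k.*2.+1, k).
Proof.
move=> p_pr /andP [kp pk].
have : p %| (k.*2.+1)`! by rewrite dvdn_fact // prime_gt0 //=; lia.
rewrite -(bin_fact (_ : k <= k.*2.+1)); last lia.
by rewrite !Euclid_dvdM // => /orP [//|/orP [] /(prime_dvd_fact _ _ p_pr)]; lia.
Qed.

Lemma prod_primes_le t : \prod_(0 <= p < t.+1 | prime p) p <= 4 ^ t.-1.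
Proof.
elim/ltn_ind: t => t IHt.
have [t_le2|t_gt2] := leqP t 2; first by case: t t_le2 {IHt} => [|[|[|]]] //; rewrite unlock.
move: t_gt2 IHt; rewrite -(odd_double_half t); set k := t./2.
case: (odd t) => /= t_gt2 IHt.
- rewrite (@big_cat_nat _ _ _ k.+2) //=; last lia.
  have -> : 4 ^ (k.*2) = 4 ^ k * 4 ^ k by rewrite -expnD addnn.
  apply: leq_mul; first by have := IHt k.+1; apply; lia.
  apply: leq_trans (bin_central_le k); apply: dvdn_leq; first by rewrite bin_gt0; lia.
  by apply: prod_primes_dvd => p p_pr; apply: prime_dvd_bin_central.
- rewrite big_mkcond big_nat_recr //= -big_mkcond.
  have -> : prime k.*2 = false.
    apply/negP => /primeP [_ /(_ 2)]; rewrite dvdn2 odd_double => /(_ isT)/orP [] /eqP; lia.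
  have := IHt k.*2.-1 ltac:(lia); rewrite prednK; last lia.
  by rewrite muln1 => /leq_trans; apply; rewrite leq_exp2l; lia.
Qed.

Lemma primorial_prod t : primorial t = \prod_(0 <= p < t.+1 | prime p) p.
Proof.
elim: t => [|t IHt]; first by rewrite unlock.
rewrite big_mkcond big_nat_recr //= -big_mkcond -IHt mulnC.
case: prime_dec => [t_pr|t_npr].
  by have -> : prime t.+1 by apply/primeZ.
by have -> : prime t.+1 = false by apply/negP => /primeZ.
Qed.

Lemma primorial_le_pow4 t : (primorial t <= Nat.pow 4 (Nat.pred t))%coq_nat.
Proof.
have -> : Nat.pow 4 t.-1 = 4 ^ t.-1 by elim: t.-1 => // i IHi; rewrite expnS -IHi.
by apply/leP; rewrite primorial_prod prod_primes_le.
Qed.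

End Chebyshev.

(** * Base-p digits *)

Fixpoint digit_count_aux (fuel p n : nat) : nat :=
  match fuel with
  | O => O
  | S f => match n with
           | O => O
           | _ => S (digit_count_aux f p (n / p))
           end
  end.

Definition digit_count (p n : nat) : nat := digit_count_aux n p n.

Section Digits.

Variable p : nat.
Hypothesis p_ge2 : (2 <= p)%nat.

Lemma div_base_lt n : (0 < n)%nat -> (n / p < n)%nat.
Proof. intros; apply Nat.div_lt; lia. Qed.

Lemma digit_sum_aux_fuel f1 f2 n :
  (n <= f1)%nat -> (n <= f2)%nat -> digit_sum_aux f1 p n = digit_sum_aux f2 p n.
Proof.
  revert f2 n; induction f1 as [|f1 IH]; intros [|f2] [|n] h1 h2; simpl; try lia.
  pose proof (div_base_lt (S n)); rewrite (IH f2); lia.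
Qed.

Lemma digit_count_aux_fuel f1 f2 n :
  (n <= f1)%nat -> (n <= f2)%nat -> digit_count_aux f1 p n = digit_count_aux f2 p n.
Proof.
  revert f2 n; induction f1 as [|f1 IH]; intros [|f2] [|n] h1 h2; simpl; try lia.
  pose proof (div_base_lt (S n)); rewrite (IH f2); lia.
Qed.

Lemma digit_sum_step n : digit_sum p n = (n mod p + digit_sum p (n / p))%nat.
Proof.
  destruct n as [|n]; [now rewrite Nat.Div0.mod_0_l, Nat.Div0.div_0_l|].
  unfold digit_sum at 1; simpl; f_equal.
  pose proof (div_base_lt (S n)); apply digit_sum_aux_fuel; lia.
Qed.

Lemma digit_count_step n : (0 < n)%nat -> digit_count p n = S (digit_count p (n / p)).
Proof.
  intros hn; destruct n as [|n]; [lia|].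
  unfold digit_count at 1; simpl; f_equal.
  pose proof (div_base_lt (S n)); apply digit_count_aux_fuel; lia.
Qed.

Lemma digit_sum_le n : (digit_sum p n <= n)%nat.
Proof.
  induction n as [n IH] using lt_wf_ind.
  destruct (Nat.eq_dec n 0) as [->|hn]; [cbn; lia|].
  rewrite digit_sum_step.
  specialize (IH (n / p)%nat (div_base_lt n ltac:(lia))).
  pose proof (Nat.div_mod n p ltac:(lia)); nia.
Qed.

Lemma digit_sum_le_digit_count n : (digit_sum p n <= (p - 1) * digit_count p n)%nat.
Proof.
  induction n as [n IH] using lt_wf_ind.
  destruct (Nat.eq_dec n 0) as [->|hn]; [cbn; lia|].
  rewrite digit_sum_step, digit_count_step by lia.
  specialize (IH (n / p)%nat (div_base_lt n ltac:(lia))).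
  pose proof (Nat.mod_upper_bound n p ltac:(lia)); lia.
Qed.

Lemma digit_sum_le_two_digits n : (digit_sum p n <= 2 * (p - 1) + n / (p * p))%nat.
Proof.
  rewrite digit_sum_step, (digit_sum_step (n / p)), Nat.Div0.div_div.
  pose proof (digit_sum_le (n / (p * p))).
  pose proof (Nat.mod_upper_bound n p ltac:(lia)).
  pose proof (Nat.mod_upper_bound (n / p) p ltac:(lia)); lia.
Qed.

Lemma digit_count_le k n : (n < p ^ k)%nat -> (digit_count p n <= k)%nat.
Proof.
  revert n; induction k as [|k IH]; intros n hn; simpl in hn.
  - now replace n with 0%nat by lia.
  - destruct (Nat.eq_dec n 0) as [->|hn0]; [cbn; lia|].
    rewrite digit_count_step by lia; apply le_n_S, IH, Nat.Div0.div_lt_upper_bound; lia.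
Qed.

Lemma lt_pow_digit_count n : (n < p ^ digit_count p n)%nat.
Proof.
  induction n as [n IH] using lt_wf_ind.
  destruct (Nat.eq_dec n 0) as [->|hn]; [simpl; lia|].
  rewrite digit_count_step by lia; simpl.
  specialize (IH (n / p)%nat (div_base_lt n ltac:(lia))).
  pose proof (Nat.div_mod n p ltac:(lia)).
  pose proof (Nat.mod_upper_bound n p ltac:(lia)); nia.
Qed.

Lemma digit_count_le_mono n n' : (n <= n')%nat -> (digit_count p n <= digit_count p n')%nat.
Proof. intros; apply digit_count_le; pose proof (lt_pow_digit_count n'); lia. Qed.

End Digits.

Lemma digit_count_le_base p q n :
  (2 <= p)%nat -> (p <= q)%nat -> (digit_count q n <= digit_count p n)%nat.
Proof.
  intros hp hq; apply digit_count_le; [lia|].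
  pose proof (lt_pow_digit_count p hp n).
  pose proof (Nat.pow_le_mono_l p q (digit_count p n) hq); lia.
Qed.

(** * Reduction to a sum of digit bounds *)

Open Scope R_scope.

Lemma prime_ge_2_nat p : prime (Z.of_nat p) -> (2 <= p)%nat.
Proof. intros hp; pose proof (prime_ge_2 _ hp); lia. Qed.

Lemma ln_le_compat x y : 0 < x -> x <= y -> ln x <= ln y.
Proof.
  intros hx [hxy|<-]; [left; apply ln_increasing|]; lra.
Qed.

Lemma ln4_pos : 0 < ln 4.
Proof. rewrite <- ln_1; apply ln_increasing; lra. Qed.

Lemma Rdiv_nonneg x y : 0 <= x -> 0 <= y -> 0 <= x / y.
Proof.
  intros hx [hy|<-]; [apply Rmult_le_pos; [|left; apply Rinv_0_lt_compat]; lra|].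
  unfold Rdiv; rewrite Rinv_0; lra.
Qed.

Lemma Rmin_le_compat a b a' b' : a <= a' -> b <= b' -> Rmin a b <= Rmin a' b'.
Proof. intros; unfold Rmin; destruct (Rle_dec a b), (Rle_dec a' b'); lra. Qed.

Lemma sum_f_R0_vanishing_tail (f : nat -> R) m t :
  (m <= t)%nat -> (forall j, (m < j <= t)%nat -> f j = 0) -> sum_f_R0 f t = sum_f_R0 f m.
Proof.
  intros hmt hf; induction hmt as [|t hmt IH]; [reflexivity|].
  rewrite tech5, IH, (hf (S t)); [lra|lia|intros; apply hf; lia].
Qed.

Lemma sum_f_R0_le_ext (f : nat -> R) t t' :
  (t <= t')%nat -> (forall j, 0 <= f j) -> sum_f_R0 f t <= sum_f_R0 f t'.
Proof.
  intros h hf; induction h as [|t' h IH]; [lra|].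
  rewrite tech5; pose proof (hf (S t')); lra.
Qed.

Lemma lt_sq_of_sqrt_lt n j : (Nat.sqrt n < j)%nat -> (n < j * j)%nat.
Proof.
  intros h; pose proof (Nat.sqrt_spec n ltac:(lia)) as [_ hs].
  pose proof (Nat.mul_le_mono _ _ _ _ h h); lia.
Qed.

Definition log_weight (p : nat) : R :=
  if prime_dec (Z.of_nat p) then ln (INR p) else 0.

Lemma log_weight_lt2 p : (p < 2)%nat -> log_weight p = 0.
Proof.
  intros hp; unfold log_weight; destruct prime_dec as [hpr|]; [|reflexivity].
  pose proof (prime_ge_2_nat p hpr); lia.
Qed.

Lemma primorial_pos t : (0 < primorial t)%nat.
Proof. induction t; simpl; [|destruct prime_dec]; lia. Qed.

Lemma sum_log_weight_eq t : sum_f_R0 log_weight t = ln (INR (primorial t)).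
Proof.
  induction t as [|t IH].
  - simpl; rewrite log_weight_lt2, ln_1 by lia; reflexivity.
  - rewrite tech5, IH; cbn [primorial]; unfold log_weight.
    pose proof (primorial_pos t).
    destruct prime_dec; [|rewrite Nat.mul_1_l; lra].
    rewrite mult_INR, ln_mult by (apply lt_0_INR; lia); lra.
Qed.

Lemma sum_log_weight_le t : sum_f_R0 log_weight t <= INR (pred t) * ln 4.
Proof.
  rewrite sum_log_weight_eq, <- ln_pow by lra.
  apply ln_le_compat; [apply lt_0_INR, primorial_pos|].
  replace 4 with (INR 4) by (simpl; lra); rewrite <- pow_INR.
  apply le_INR, Chebyshev.primorial_le_pow4.
Qed.

Lemma sum_log_weight_mul_le (g : nat -> R) :
  (forall j, (2 <= j)%nat -> g (S j) <= g j) -> (forall j, 0 <= g j) ->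
  forall t, sum_f_R0 (fun p => log_weight p * g p) t <= ln 4 * sum_f_R0 g t.
Proof.
  intros g_mono g_nonneg.
  pose proof ln4_pos.
  assert (abel : forall t, (1 <= t)%nat ->
    sum_f_R0 (fun p => log_weight p * g p) t
      <= ln 4 * sum_f_R0 g t + (sum_f_R0 log_weight t - INR (pred t) * ln 4) * g t).
  { induction t as [|t IH]; intros ht; [lia|].
    destruct (Nat.eq_dec t 0) as [->|].
    - simpl; rewrite !log_weight_lt2 by lia.
      pose proof (g_nonneg 0%nat); pose proof (g_nonneg 1%nat); nra.
    - specialize (IH ltac:(lia)); rewrite !tech5.
      (* the defect of Chebyshev's bound at t is nonpositive, and g only decreases *)
      assert (0 <= (INR (pred t) * ln 4 - sum_f_R0 log_weight t) * (g t - g (S t))).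
      { destruct (Nat.eq_dec t 1) as [->|]; [simpl; rewrite !log_weight_lt2 by lia; lra|].
        pose proof (sum_log_weight_le t); pose proof (g_mono t ltac:(lia)).
        apply Rmult_le_pos; lra. }
      replace (pred (S t)) with (S (pred t)) by lia; rewrite S_INR; lra. }
  intros [|t]; [simpl; rewrite log_weight_lt2 by lia; pose proof (g_nonneg 0%nat); nra|].
  pose proof (abel (S t) ltac:(lia)); pose proof (sum_log_weight_le (S t)).
  pose proof (g_nonneg (S t)); nra.
Qed.

Definition digit_bound (n j : nat) : R :=
  if andb (Nat.leb 2 j) (Nat.leb (j * j) n) then
    Rmin (INR (digit_count j n)) (2 + INR (n / (j * j)) / INR (j - 1))
  else 0.

Lemma digit_bound_nonneg n j : 0 <= digit_bound n j.
Proof.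
  unfold digit_bound; destruct (andb _ _); [|lra].
  apply Rmin_glb; [apply pos_INR|].
  pose proof (Rdiv_nonneg _ _ (pos_INR (n / (j * j))) (pos_INR (j - 1))); lra.
Qed.

Lemma digit_bound_eq n j : (2 <= j)%nat -> (j * j <= n)%nat ->
  digit_bound n j = Rmin (INR (digit_count j n)) (2 + INR (n / (j * j)) / INR (j - 1)).
Proof.
  intros hj hjn; unfold digit_bound.
  now rewrite (proj2 (Nat.leb_le 2 j) hj), (proj2 (Nat.leb_le _ n) hjn).
Qed.

Lemma digit_bound_small n j : (n < j * j)%nat -> digit_bound n j = 0.
Proof.
  intros h; unfold digit_bound; rewrite (proj2 (Nat.leb_gt _ n) h).
  now rewrite Bool.andb_false_r.
Qed.

Lemma digit_bound_succ_le n j : (2 <= j)%nat -> digit_bound n (S j) <= digit_bound n j.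
Proof.
  intros hj.
  destruct (le_lt_dec (S j * S j) n) as [hjn|hjn];
    [|rewrite digit_bound_small by lia; apply digit_bound_nonneg].
  rewrite !digit_bound_eq by nia; apply Rmin_le_compat.
  - apply le_INR, digit_count_le_base; lia.
  - apply Rplus_le_compat_l; unfold Rdiv.
    assert (0 < INR (j - 1)) by (apply lt_0_INR; lia).
    apply Rmult_le_compat; [apply pos_INR| |apply le_INR, Nat.div_le_compat_l; nia|].
    + left; apply Rinv_0_lt_compat, lt_0_INR; lia.
    + apply Rinv_le_contravar, le_INR; [lra|lia].
Qed.

Lemma digit_bound_le_mono n n' j : (n <= n')%nat -> digit_bound n j <= digit_bound n' j.
Proof.
  intros hn.
  destruct (le_lt_dec 2 j) as [hj|hj];
    [|unfold digit_bound; rewrite (proj2 (Nat.leb_gt 2 j) hj); simpl; lra].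
  destruct (le_lt_dec (j * j) n) as [hjn|hjn];
    [|rewrite digit_bound_small by lia; apply digit_bound_nonneg].
  rewrite !digit_bound_eq by lia; apply Rmin_le_compat.
  - apply le_INR, digit_count_le_mono; lia.
  - apply Rplus_le_compat_l, Rmult_le_compat_r.
    + left; apply Rinv_0_lt_compat, lt_0_INR; lia.
    + apply le_INR, Nat.Div0.div_le_mono; lia.
Qed.

Lemma digit_sum_div_le_digit_bound n p : (2 <= p)%nat -> (p * p <= n)%nat ->
  INR (digit_sum p n) / INR (p - 1) <= digit_bound n p.
Proof.
  intros hp hpn; assert (0 < INR (p - 1)) by (apply lt_0_INR; lia).
  rewrite digit_bound_eq by lia; apply Rmin_glb; apply (Rmult_le_reg_r (INR (p - 1))); auto;
    unfold Rdiv; rewrite Rmult_assoc, Rinv_l by lra.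
  - rewrite Rmult_1_r, <- mult_INR, Nat.mul_comm; apply le_INR, digit_sum_le_digit_count; lia.
  - rewrite Rmult_plus_distr_r, Rmult_assoc, Rinv_l, Rmult_1_r, Rmult_1_r by lra.
    pose proof (le_INR _ _ (digit_sum_le_two_digits p hp n)) as h.
    rewrite plus_INR, mult_INR in h; simpl in h; lra.
Qed.

Lemma B_R_term_le n p : (2 <= n)%nat ->
  B_R_term n p <= (INR n - 1) * (log_weight p * digit_bound n p).
Proof.
  intros hn; assert (1 <= INR n) by (apply (le_INR 1); lia).
  unfold B_R_term, log_weight.
  destruct (Z.of_nat p * Z.of_nat p <=? Z.of_nat n)%Z eqn:hpn;
    [|destruct prime_dec; [rewrite digit_bound_small by lia|]; lra].
  destruct prime_dec as [hpr|]; [|lra].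
  pose proof (prime_ge_2_nat p hpr) as hp.
  pose proof (digit_sum_div_le_digit_bound n p hp ltac:(lia)).
  assert (hp1 : INR (p - 1) = INR p - 1) by (rewrite minus_INR by lia; simpl; lra).
  assert (0 < INR (p - 1)) by (apply lt_0_INR; lia).
  assert (0 <= ln (INR p)) by (rewrite <- ln_1; apply ln_le_compat; [lra|apply (le_INR 1); lia]).
  replace ((INR n - 1) / (INR p - 1) * INR (digit_sum p n) * ln (INR p))
    with ((INR n - 1) * (ln (INR p) * (INR (digit_sum p n) / INR (p - 1))))
    by (rewrite hp1; field; lra).
  apply Rmult_le_compat_l, Rmult_le_compat_l; lra.
Qed.

Definition digit_bound_sum (n : nat) : R := sum_f_R0 (digit_bound n) n.

Lemma B_R_le_digit_bound_sum n : (2 <= n)%nat ->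
  B_R n <= (INR n - 1) * (ln 4 * digit_bound_sum n).
Proof.
  intros hn; unfold B_R, digit_bound_sum.
  apply Rle_trans with (sum_f_R0 (fun p => (INR n - 1) * (log_weight p * digit_bound n p)) n).
  - apply sum_Rle; intros; apply B_R_term_le; lia.
  - rewrite (sum_eq _ (fun p => log_weight p * digit_bound n p * (INR n - 1))), <- scal_sum
      by (intros; ring).
    apply Rmult_le_compat_l.
    + assert (1 <= INR n) by (apply (le_INR 1); lia); lra.
    + apply sum_log_weight_mul_le; [apply digit_bound_succ_le|apply digit_bound_nonneg].
Qed.

Lemma digit_bound_sum_sqrt n : digit_bound_sum n = sum_f_R0 (digit_bound n) (Nat.sqrt n).
Proof.
  apply sum_f_R0_vanishing_tail; [apply Nat.sqrt_le_lin|].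
  intros j hj; apply digit_bound_small, lt_sq_of_sqrt_lt; lia.
Qed.

Lemma digit_bound_sum_le_mono n n' : (n <= n')%nat -> digit_bound_sum n <= digit_bound_sum n'.
Proof.
  intros hn; unfold digit_bound_sum.
  apply Rle_trans with (sum_f_R0 (digit_bound n) n').
  - apply sum_f_R0_le_ext; [lia|apply digit_bound_nonneg].
  - apply sum_Rle; intros; apply digit_bound_le_mono; lia.
Qed.

Lemma digit_bound_sum_nonneg n : 0 <= digit_bound_sum n.
Proof. apply cond_pos_sum; intros; apply digit_bound_nonneg. Qed.

(* Repeated squaring of the fixed-point number [a / 10^9], rounding down. *)
Fixpoint squarings_floor (k : nat) (a : Z) : Z :=
  match k with
  | O => a
  | S k => squarings_floor k (a * a / 1000000000)
  end.

Lemma exp_ge_squarings_floor k a y : (0 <= a)%Z ->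
  IZR a / 1000000000 <= exp y -> IZR (squarings_floor k a) / 1000000000 <= exp (2 ^ k * y).
Proof.
  revert a y; induction k as [|k IH]; intros a y ha h; simpl; [now rewrite Rmult_1_l|].
  replace (2 * 2 ^ k * y) with (2 ^ k * (2 * y)) by ring.
  apply IH; [apply Z.div_pos; lia|].
  pose proof (Z.mul_div_le (a * a) 1000000000 ltac:(lia)) as hfloor.
  apply IZR_le in hfloor; rewrite !mult_IZR in hfloor.
  assert (0 <= IZR a) by (apply IZR_le; lia).
  replace (2 * y) with (y + y) by ring; rewrite exp_plus.
  assert (0 <= IZR a / 1000000000) by lra.
  apply Rle_trans with (IZR a / 1000000000 * (IZR a / 1000000000)); [lra|].
  apply Rmult_le_compat; lra.
Qed.

Lemma ln2_le : ln 2 <= 6935 / 10000.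
Proof.
  rewrite <- (ln_exp (6935 / 10000)); apply ln_le_compat; [lra|].
  replace (6935 / 10000) with (2 ^ 10 * (6935 / 10240000)) by (simpl; lra).
  apply Rle_trans with (IZR (squarings_floor 10 1000677246) / 1000000000).
  - assert (h : (2000000000 <= squarings_floor 10 1000677246)%Z)
      by (apply Z.leb_le; vm_compute; reflexivity).
    apply IZR_le in h; lra.
  - apply exp_ge_squarings_floor; [lia|].
    pose proof (exp_ineq1_le (6935 / 10240000)); lra.
Qed.

Lemma ln4_le : ln 4 <= 1387 / 1000.
Proof. replace 4 with (2 * 2) by lra; rewrite ln_mult by lra; pose proof ln2_le; lra. Qed.

Lemma Rpower_3_2 x : 0 < x -> Rpower x (3 / 2) = x * sqrt x.
Proof.
  intros hx; replace (3 / 2) with (1 + / 2) by field.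
  now rewrite Rpower_plus, Rpower_1, Rpower_sqrt.
Qed.

Lemma INR_sqrt_le n : INR (Nat.sqrt n) <= sqrt (INR n).
Proof.
  pose proof (Nat.sqrt_spec n ltac:(lia)) as [hs _].
  rewrite <- (sqrt_square (INR (Nat.sqrt n))) by apply pos_INR.
  apply sqrt_le_1_alt; rewrite <- mult_INR; apply le_INR, hs.
Qed.

Lemma Zsqrt_scaled_le n : IZR (Z.sqrt (10000 * Z.of_nat n)) / 100 <= sqrt (INR n).
Proof.
  pose proof (Z.sqrt_spec (10000 * Z.of_nat n) ltac:(lia)) as [hs _].
  pose proof (Z.sqrt_nonneg (10000 * Z.of_nat n)).
  set (s := Z.sqrt (10000 * Z.of_nat n)) in *.
  apply IZR_le in hs; rewrite !mult_IZR, <- INR_IZR_INZ in hs.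
  assert (0 <= IZR s) by (apply IZR_le; lia).
  rewrite <- (sqrt_square (IZR s / 100)) by lra.
  apply sqrt_le_1_alt; nra.
Qed.

(** * Large n *)

Lemma digit_bound_le_bits n j D : (n < 2 ^ D)%nat -> digit_bound n j <= INR D.
Proof.
  intros hD; unfold digit_bound.
  destruct (Nat.leb 2 j) eqn:hj; [|apply pos_INR]; apply Nat.leb_le in hj.
  destruct (Nat.leb (j * j) n); [|apply pos_INR]; simpl.
  apply Rle_trans with (INR (digit_count j n)); [apply Rmin_l|].
  apply le_INR, digit_count_le; [lia|].
  pose proof (Nat.pow_le_mono_l 2 j D hj); lia.
Qed.

Lemma INR_div_le a b : (0 < b)%nat -> INR (a / b) <= INR a / INR b.
Proof.
  intros hb; assert (0 < INR b) by (apply lt_0_INR; lia).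
  apply (Rmult_le_reg_l (INR b)); [lra|].
  replace (INR b * (INR a / INR b)) with (INR a) by (field; lra).
  rewrite <- mult_INR; apply le_INR, Nat.Div0.mul_div_le.
Qed.

(* [floor(n/j^2)/(j-1) <= n/((c+1) j (j-1))] for [j > c], and the right-hand side telescopes. *)
Lemma digit_bound_le_telescoping n j c : (1 <= c)%nat -> (c < j)%nat ->
  digit_bound n j <= 2 + INR n / INR (S c) * (1 / INR (j - 1) - 1 / INR j).
Proof.
  intros hc hj.
  assert (0 < INR (j - 1)) by (apply lt_0_INR; lia).
  assert (hj1 : INR (j - 1) = INR j - 1) by (rewrite minus_INR by lia; simpl; lra).
  assert (INR (S c) <= INR j) by (apply le_INR; lia).
  assert (0 < INR (S c)) by (apply lt_0_INR; lia).
  pose proof (pos_INR n).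
  replace (INR n / INR (S c) * (1 / INR (j - 1) - 1 / INR j))
    with (INR n / (INR (S c) * INR j * INR (j - 1))) by (rewrite hj1; field; repeat split; lra).
  assert (tail_nonneg : 0 <= INR n / (INR (S c) * INR j * INR (j - 1)))
    by (apply Rdiv_nonneg; [|apply Rmult_le_pos; [apply Rmult_le_pos|]]; lra).
  destruct (le_lt_dec (j * j) n) as [hjn|hjn]; [|rewrite digit_bound_small by lia; lra].
  rewrite digit_bound_eq by lia.
  apply Rle_trans with (2 + INR (n / (j * j)) / INR (j - 1)); [apply Rmin_r|].
  apply Rplus_le_compat_l.
  apply Rle_trans with (INR n / (INR j * INR j) / INR (j - 1)).
  - unfold Rdiv at 1 3; apply Rmult_le_compat_r; [left; apply Rinv_0_lt_compat; lra|].
    rewrite <- mult_INR; apply INR_div_le; nia.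
  - unfold Rdiv; rewrite Rmult_assoc, <- Rinv_mult.
    apply Rmult_le_compat_l; [lra|].
    apply Rinv_le_contravar; [repeat apply Rmult_lt_0_compat; lra|].
    apply Rmult_le_compat_r; [lra|]; apply Rmult_le_compat_r; lra.
Qed.

Lemma sum_digit_bound_le_split n m c D : (n < 2 ^ D)%nat -> (1 <= c <= m)%nat ->
  sum_f_R0 (digit_bound n) m <= INR c * INR D + 2 * INR m + INR n / (INR c * INR (S c)).
Proof.
  intros hD hcm.
  assert (head : forall t, sum_f_R0 (digit_bound n) t <= INR t * INR D).
  { induction t as [|t IH]; [unfold digit_bound; simpl; lra|].
    rewrite tech5, S_INR; pose proof (digit_bound_le_bits n (S t) D hD); lra. }
  assert (tail : forall t, (c <= t)%nat -> sum_f_R0 (digit_bound n) t <=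
    sum_f_R0 (digit_bound n) c + 2 * INR (t - c) + INR n / INR (S c) * (1 / INR c - 1 / INR t)).
  { intros t hct; induction hct as [|t hct IH]; [rewrite Nat.sub_diag; simpl; lra|].
    rewrite tech5; pose proof (digit_bound_le_telescoping n (S t) c ltac:(lia) ltac:(lia)).
    replace (S t - 1)%nat with t in * by lia.
    replace (S t - c)%nat with (S (t - c)) by lia; rewrite S_INR; lra. }
  assert (0 < INR c) by (apply lt_0_INR; lia).
  assert (0 < INR (S c)) by (apply lt_0_INR; lia).
  assert (INR (m - c) <= INR m) by (apply le_INR; lia).
  assert (0 <= INR n / INR (S c) * (1 / INR m))
    by (apply Rmult_le_pos; apply Rdiv_nonneg; try apply pos_INR; lra).
  replace (INR n / (INR c * INR (S c))) with (INR n / INR (S c) * (1 / INR c)) by (field; lra).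
  pose proof (tail m ltac:(lia)); pose proof (head c); lra.
Qed.

Lemma poly_le_pow2 D : (29 <= D)%nat -> ((11 * Z.of_nat D ^ 2 + 1) ^ 2 <= 2 ^ (Z.of_nat D - 1))%Z.
Proof.
  induction 1 as [|D hD IH]; [apply Z.leb_le; vm_compute; reflexivity|].
  replace (Z.of_nat (S D) - 1)%Z with (Z.succ (Z.of_nat D - 1)) by lia.
  rewrite Z.pow_succ_r by lia; rewrite Nat2Z.inj_succ.
  assert ((11 * (Z.succ (Z.of_nat D)) ^ 2 + 1) ^ 2 <= 2 * (11 * Z.of_nat D ^ 2 + 1) ^ 2)%Z by nia.
  lia.
Qed.

Lemma large_log2_bounds n : (2 ^ 28 <= Z.of_nat n)%Z ->
  (29 <= S (Nat.log2 n))%nat /\ (11 * S (Nat.log2 n) * S (Nat.log2 n) <= Nat.sqrt n)%nat.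
Proof.
  intros hn.
  pose proof (Nat.log2_spec n ltac:(lia)) as [hlog1 hlog2].
  pose proof (Nat.sqrt_spec n ltac:(lia)) as [_ hsqrt].
  apply Nat2Z.inj_le in hlog1; apply Nat2Z.inj_lt in hlog2, hsqrt.
  rewrite Nat2Z.inj_pow in hlog1, hlog2.
  assert (hD : (29 <= S (Nat.log2 n))%nat).
  { destruct (le_lt_dec 29 (S (Nat.log2 n))) as [h|h]; [exact h|].
    pose proof (Z.pow_le_mono_r 2 (Z.of_nat (S (Nat.log2 n))) 28 ltac:(lia) ltac:(lia)); lia. }
  split; [exact hD|].
  pose proof (poly_le_pow2 _ hD) as hpow.
  replace (Z.of_nat (S (Nat.log2 n)) - 1)%Z with (Z.of_nat (Nat.log2 n)) in hpow by lia.
  set (D := S (Nat.log2 n)) in *; set (m := Nat.sqrt n) in *.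
  assert (hsq : ((11 * Z.of_nat D ^ 2 + 1) ^ 2 < (Z.of_nat m + 1) ^ 2)%Z) by (simpl in *; nia).
  apply Z.pow_lt_mono_l_iff in hsq; lia.
Qed.

Lemma digit_bound_sum_le_large n : (2 ^ 28 <= Z.of_nat n)%Z ->
  digit_bound_sum n <= 288 / 100 * INR (Nat.sqrt n).
Proof.
  intros hn; destruct (large_log2_bounds n hn) as [hD hDm].
  pose proof (Nat.log2_spec n ltac:(lia)) as [_ hbits].
  pose proof (Nat.sqrt_spec n ltac:(lia)) as [_ hsqrt].
  set (D := S (Nat.log2 n)) in *; set (m := Nat.sqrt n) in *.
  (* below [c] each term is at most [D]; above it the terms telescope *)
  set (c := (m / (2 * D))%nat).
  assert (hc_low : (2 * D * c <= m)%nat) by apply Nat.Div0.mul_div_le.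
  assert (hc_high : (S m <= 2 * D * S c)%nat).
  { pose proof (Nat.div_mod m (2 * D) ltac:(lia)) as hdiv; fold c in hdiv.
    pose proof (Nat.mod_upper_bound m (2 * D) ltac:(lia)); lia. }
  assert (hc1 : (1 <= c)%nat) by nia.
  rewrite digit_bound_sum_sqrt.
  eapply Rle_trans; [apply (sum_digit_bound_le_split n m c D); [exact hbits|nia]|].
  assert (r_low : 2 * INR D * INR c <= INR m)
    by (replace 2 with (INR 2) by (simpl; lra); rewrite <- !mult_INR; apply le_INR, hc_low).
  assert (r_high : INR m + 1 <= 2 * INR D * (INR c + 1))
    by (replace 2 with (INR 2) by (simpl; lra); rewrite <- !S_INR, <- !mult_INR;
        apply le_INR, hc_high).
  assert (r_D : 11 * INR D * INR D <= INR m)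
    by (replace 11 with (INR 11) by (simpl; lra); rewrite <- !mult_INR; apply le_INR, hDm).
  assert (r_n : INR n <= (INR m + 1) * (INR m + 1))
    by (rewrite <- S_INR, <- mult_INR; apply le_INR; lia).
  assert (29 <= INR D) by (replace 29 with (INR 29) by (simpl; lra); apply le_INR, hD).
  assert (1 <= INR c) by (apply (le_INR 1), hc1).
  rewrite S_INR; set (x := INR c) in *; set (d := INR D) in *; set (M := INR m) in *.
  assert (hM : 2 * d <= M) by nra.
  assert (hsq : (M + 1 - 2 * d) * (M + 1) <= (2 * d * x) * (2 * d * (x + 1)))
    by (apply Rmult_le_compat; nra).
  assert (hratio : 4 * (d * d) * (M + 1) <= 38 / 100 * M * (M + 1 - 2 * d)).
  { assert (319 * d <= M) by nra.
    apply Rle_trans with (4 / 11 * M * (M + 1)); [nra|].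
    replace (4 / 11 * M * (M + 1)) with (M * (4 / 11 * (M + 1))) by ring.
    replace (38 / 100 * M * (M + 1 - 2 * d)) with (M * (38 / 100 * (M + 1 - 2 * d))) by ring.
    apply Rmult_le_compat_l; lra. }
  assert (hn_sq : 4 * (d * d) * INR n <= 4 * (d * d) * (38 / 100 * M * (x * (x + 1)))) by nra.
  apply Rmult_le_reg_l in hn_sq; [|nra].
  assert (INR n / (x * (x + 1)) <= 38 / 100 * M).
  { apply (Rmult_le_reg_r (x * (x + 1))); [nra|].
    unfold Rdiv; rewrite Rmult_assoc, Rinv_l; nra. }
  lra.
Qed.

Lemma B_R_le_large n : (2 ^ 28 <= Z.of_nat n)%Z -> B_R n <= 4 * (INR n * sqrt (INR n)).
Proof.
  intros hn.
  pose proof (B_R_le_digit_bound_sum n ltac:(lia)) as hB.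
  pose proof (digit_bound_sum_le_large n hn).
  pose proof (digit_bound_sum_nonneg n).
  pose proof (INR_sqrt_le n); pose proof (pos_INR (Nat.sqrt n)).
  pose proof ln4_pos; pose proof ln4_le.
  assert (1 <= INR n) by (apply (le_INR 1); lia).
  apply (Rle_trans _ _ _ hB).
  apply Rle_trans with (INR n * (1387 / 1000 * (288 / 100 * INR (Nat.sqrt n)))); [|nra].
  apply Rmult_le_compat; nra.
Qed.

(** * Small and moderate n, by computation *)

Definition ceil_div (a b : Z) : Z := ((a + b - 1) / b)%Z.

Lemma ceil_div_ge a b : (0 < b)%Z -> IZR a / IZR b <= IZR (ceil_div a b).
Proof.
  intros hb; unfold ceil_div.
  pose proof (Z.div_mod (a + b - 1) b ltac:(lia)).
  pose proof (Z.mod_pos_bound (a + b - 1) b hb).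
  assert (h : (a <= b * ((a + b - 1) / b))%Z) by lia.
  apply IZR_le in h; rewrite mult_IZR in h.
  assert (0 < IZR b) by (apply IZR_lt; lia).
  apply (Rmult_le_reg_l (IZR b)); [lra|].
  replace (IZR b * (IZR a / IZR b)) with (IZR a) by (field; lra); exact h.
Qed.

Fixpoint sum_range_Z (f : Z -> Z) (j : Z) (k : nat) : Z :=
  match k with
  | O => 0
  | S k => f j + sum_range_Z f (j + 1) k
  end.

Lemma IZR_sum_range_Z f j k :
  IZR (sum_range_Z f (Z.of_nat j) (S k)) = sum_f_R0 (fun i => IZR (f (Z.of_nat (j + i)))) k.
Proof.
  revert j; induction k as [|k IH]; intros j; [simpl; now rewrite Nat.add_0_r, Z.add_0_r|].
  change (sum_range_Z f (Z.of_nat j) (S (S k)))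
    with (f (Z.of_nat j) + sum_range_Z f (Z.of_nat j + 1) (S k))%Z.
  replace (Z.of_nat j + 1)%Z with (Z.of_nat (S j)) by lia.
  rewrite plus_IZR, IH, (decomp_sum _ (S k)), Nat.add_0_r by lia; f_equal.
  apply sum_eq; intros i _; do 3 f_equal; lia.
Qed.

Definition sum_upto_sqrt_Z (f : Z -> Z) (n : Z) : Z :=
  sum_range_Z f 0 (S (Z.to_nat (Z.sqrt n))).

Lemma IZR_sum_upto_sqrt_Z f n :
  IZR (sum_upto_sqrt_Z f (Z.of_nat n)) = sum_f_R0 (fun j => IZR (f (Z.of_nat j))) (Nat.sqrt n).
Proof.
  unfold sum_upto_sqrt_Z.
  replace (Z.to_nat (Z.sqrt (Z.of_nat n))) with (Nat.sqrt n).
  - apply (IZR_sum_range_Z f 0).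
  - pose proof (Nat.sqrt_spec n ltac:(lia)).
    rewrite (Z.sqrt_unique (Z.of_nat n) (Z.of_nat (Nat.sqrt n))); lia.
Qed.

Fixpoint digit_sum_Z (fuel : nat) (p n : Z) : Z :=
  match fuel with
  | O => 0
  | S f => if (n <=? 0)%Z then 0 else n mod p + digit_sum_Z f p (n / p)
  end.

Fixpoint digit_count_Z (fuel : nat) (p n : Z) : Z :=
  match fuel with
  | O => 0
  | S f => if (n <=? 0)%Z then 0 else 1 + digit_count_Z f p (n / p)
  end.

Lemma div_lt_pow2 p n f : (2 <= p)%nat ->
  (Z.of_nat n < 2 ^ Z.of_nat (S f))%Z -> (Z.of_nat (n / p) < 2 ^ Z.of_nat f)%Z.
Proof.
  intros hp h; rewrite Nat2Z.inj_succ, Z.pow_succ_r in h by lia.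
  pose proof (Nat.Div0.mul_div_le n p).
  pose proof (Nat.mul_le_mono_r 2 p (n / p) hp); lia.
Qed.

Lemma digit_sum_Z_spec f p n : (2 <= p)%nat -> (Z.of_nat n < 2 ^ Z.of_nat f)%Z ->
  digit_sum_Z f (Z.of_nat p) (Z.of_nat n) = Z.of_nat (digit_sum p n).
Proof.
  revert n; induction f as [|f IH]; intros n hp hn; cbn [digit_sum_Z].
  - now replace n with 0%nat by (simpl in hn; lia).
  - destruct (Z.leb_spec (Z.of_nat n) 0); [now replace n with 0%nat by lia|].
    rewrite <- Nat2Z.inj_div, <- Nat2Z.inj_mod, IH, (digit_sum_step p hp n);
      [lia|lia|apply div_lt_pow2; assumption].
Qed.

Lemma digit_count_Z_spec f p n : (2 <= p)%nat -> (Z.of_nat n < 2 ^ Z.of_nat f)%Z ->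
  digit_count_Z f (Z.of_nat p) (Z.of_nat n) = Z.of_nat (digit_count p n).
Proof.
  revert n; induction f as [|f IH]; intros n hp hn; cbn [digit_count_Z].
  - now replace n with 0%nat by (simpl in hn; lia).
  - destruct (Z.leb_spec (Z.of_nat n) 0); [now replace n with 0%nat by lia|].
    rewrite <- Nat2Z.inj_div, IH, (digit_count_step p hp n);
      [lia|lia|lia|apply div_lt_pow2; assumption].
Qed.

Definition digit_bound_Z (N j : Z) : Z :=
  if (j <? 2)%Z then 0
  else Z.min (1000 * digit_count_Z 64 j N) (2000 + ceil_div (1000 * (N / (j * j))) (j - 1)).

Lemma digit_bound_le_Z N j : (Z.of_nat N < 2 ^ 64)%Z -> (j * j <= N)%nat ->
  1000 * digit_bound N j <= IZR (digit_bound_Z (Z.of_nat N) (Z.of_nat j)).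
Proof.
  intros hN hjN; unfold digit_bound_Z.
  destruct (Z.ltb_spec (Z.of_nat j) 2) as [hj|hj].
  - unfold digit_bound; rewrite (proj2 (Nat.leb_gt 2 j)) by lia; simpl; lra.
  - rewrite digit_bound_eq, digit_count_Z_spec by lia.
    assert (hcount : 1000 * INR (digit_count j N) <= IZR (1000 * Z.of_nat (digit_count j N)))
      by (rewrite mult_IZR, <- INR_IZR_INZ; lra).
    assert (hfloor : 1000 * (2 + INR (N / (j * j)) / INR (j - 1)) <=
      IZR (2000 + ceil_div (1000 * (Z.of_nat N / (Z.of_nat j * Z.of_nat j))) (Z.of_nat j - 1))).
    { rewrite plus_IZR.
      pose proof (ceil_div_ge (1000 * (Z.of_nat N / (Z.of_nat j * Z.of_nat j)))
        (Z.of_nat j - 1) ltac:(lia)) as hc.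
      rewrite <- Nat2Z.inj_mul, <- Nat2Z.inj_div in hc |- *.
      rewrite mult_IZR, <- INR_IZR_INZ in hc.
      replace (IZR (Z.of_nat j - 1)) with (INR (j - 1)) in hc
        by (rewrite INR_IZR_INZ, Nat2Z.inj_sub by lia; reflexivity).
      unfold Rdiv in *; lra. }
    destruct (Z.min_spec (1000 * Z.of_nat (digit_count j N))
      (2000 + ceil_div (1000 * (Z.of_nat N / (Z.of_nat j * Z.of_nat j))) (Z.of_nat j - 1)))
      as [[_ ->]|[_ ->]].
    + pose proof (Rmin_l (INR (digit_count j N)) (2 + INR (N / (j * j)) / INR (j - 1))); lra.
    + pose proof (Rmin_r (INR (digit_count j N)) (2 + INR (N / (j * j)) / INR (j - 1))); lra.
Qed.

Lemma digit_bound_sum_le_Z N : (Z.of_nat N < 2 ^ 64)%Z ->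
  1000 * digit_bound_sum N <= IZR (sum_upto_sqrt_Z (digit_bound_Z (Z.of_nat N)) (Z.of_nat N)).
Proof.
  intros hN; rewrite digit_bound_sum_sqrt, IZR_sum_upto_sqrt_Z, scal_sum.
  apply sum_Rle; intros j hj; rewrite Rmult_comm.
  apply digit_bound_le_Z; [exact hN|].
  pose proof (Nat.sqrt_spec N ltac:(lia)) as [hs _]; nia.
Qed.

(* Since [digit_bound_sum] is monotone, this certifies
   [(n - 1) * ln 4 * digit_bound_sum n <= 4 * N * floor (100 sqrt N) / 100] for [N <= n <= N']. *)
Definition block_ok (N N' : Z) : bool :=
  (2 <=? N)%Z && (N <=? N')%Z && (N' <? 2 ^ 64)%Z &&
  (1387 * (N' - 1) * sum_upto_sqrt_Z (digit_bound_Z N') N' <=? 40000 * N * Z.sqrt (10000 * N))%Z.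

Lemma B_R_le_of_block_ok N N' n : block_ok N N' = true -> (N <= Z.of_nat n <= N')%Z ->
  B_R n <= 4 * (INR n * sqrt (INR n)).
Proof.
  unfold block_ok; intros hok hn.
  apply andb_prop in hok as [hok hcheck]; apply andb_prop in hok as [hok hN'];
    apply andb_prop in hok as [hN2 _].
  apply Z.leb_le in hN2, hcheck; apply Z.ltb_lt in hN'.
  rewrite <- (Z2Nat.id N') in hcheck, hN' by lia; rewrite <- (Z2Nat.id N) in hcheck by lia.
  set (n' := Z.to_nat N') in *; set (n0 := Z.to_nat N) in *.
  assert (hsum : 1000 * digit_bound_sum n <= IZR (sum_upto_sqrt_Z (digit_bound_Z (Z.of_nat n'))
    (Z.of_nat n'))).
  { apply Rle_trans with (1000 * digit_bound_sum n'); [|apply digit_bound_sum_le_Z; lia].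
    apply Rmult_le_compat_l; [lra|apply digit_bound_sum_le_mono; lia]. }
  apply IZR_le in hcheck; rewrite !mult_IZR, minus_IZR, <- !INR_IZR_INZ in hcheck.
  set (Sz := IZR (sum_upto_sqrt_Z _ _)) in *.
  pose proof (Zsqrt_scaled_le n0).
  set (sq := IZR (Z.sqrt (10000 * Z.of_nat n0))) in *.
  assert (0 <= sq) by (apply IZR_le, Z.sqrt_nonneg).
  assert (INR n0 <= INR n) by (apply le_INR; lia).
  assert (INR n <= INR n') by (apply le_INR; lia).
  assert (2 <= INR n0) by (apply (le_INR 2); lia).
  assert (sqrt (INR n0) <= sqrt (INR n)) by (apply sqrt_le_1_alt; lra).
  pose proof (digit_bound_sum_nonneg n); pose proof ln4_pos; pose proof ln4_le.
  eapply Rle_trans; [apply B_R_le_digit_bound_sum; lia|].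
  apply Rle_trans with ((INR n' - 1) * (1387 / 1000 * (Sz / 1000))).
  { apply Rmult_le_compat; try lra; [apply Rmult_le_pos; lra|].
    apply Rmult_le_compat; lra. }
  apply Rle_trans with (4 * (INR n0 * (sq / 100))); [lra|].
  apply Rmult_le_compat_l; [lra|]; apply Rmult_le_compat; lra.
Qed.

Fixpoint blocks_ok (s : Z) (ends : list Z) (e : Z) : bool :=
  match ends with
  | nil => (e <? s)%Z
  | N' :: ends => block_ok s N' && blocks_ok (N' + 1) ends e
  end.

Lemma B_R_le_of_blocks_ok ends s e n : blocks_ok s ends e = true -> (s <= Z.of_nat n <= e)%Z ->
  B_R n <= 4 * (INR n * sqrt (INR n)).
Proof.
  revert s; induction ends as [|N' ends IH]; intros s hok hn; simpl in hok.
  - apply Z.ltb_lt in hok; lia.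
  - apply andb_prop in hok as [hblock hok].
    destruct (Z.le_gt_cases (Z.of_nat n) N'); [apply (B_R_le_of_block_ok s N'); auto; lia|].
    apply (IH (N' + 1)%Z); auto; lia.
Qed.

(* Right end points of a greedy cover of [1768, 2^28) by intervals passing [block_ok]. *)
Definition block_ends : list Z := [
  1768; 1769; 1771; 1774; 1779; 1786; 1796; 1807; 1822; 1844; 1848; 1853; 1859; 1868; 1880; 1898;
  1925; 1935; 1947; 1963; 1987; 2022; 2039; 2047; 2057; 2072; 2095; 2115; 2127; 2145; 2169; 2186;
  2208; 2209; 2211; 2214; 2218; 2224; 2233; 2247; 2267; 2296; 2303; 2311; 2322; 2338; 2361; 2394;
  2400; 2401; 2402; 2404; 2407; 2411; 2417; 2423; 2432; 2446; 2465; 2492; 2499; 2508; 2521; 2538;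
  2561; 2593; 2604; 2620; 2644; 2679; 2703; 2728; 2761; 2808; 2843; 2889; 2917; 2957; 3018; 3068;
  3124; 3162; 3213; 3248; 3300; 3363; 3424; 3480; 3553; 3614; 3704; 3792; 3877; 3968; 4085; 4144;
  4224; 4304; 4370; 4466; 4559; 4646; 4760; 4888; 5027; 5178; 5328; 5475; 5625; 5791; 5981; 6202;
  6411; 6610; 6843; 7066; 7334; 7604; 7912; 8204; 8506; 8835; 9215; 9603; 9999; 10434; 10934;
  11456; 12075; 12757; 13455; 14247; 15128; 16049; 16923; 17955; 19043; 20201; 21483; 22882;
  24439; 26232; 28223; 30350; 32760; 35343; 38288; 41570; 45252; 49283; 53823; 59041; 64763;
  71058; 78141; 86134; 95291; 105624; 117462; 130875; 146077; 163386; 183226; 206115; 232703;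
  263009; 297996; 338662; 385701; 440714; 504974; 579177; 666422; 769128; 889688; 1032255;
  1199557; 1398301; 1633676; 1912688; 2244306; 2640624; 3114545; 3682560; 4363920; 5180435;
  6165288; 7353985; 8790500; 10528346; 12635540; 15194403; 18304674; 22096103; 26724300;
  32384657; 39309375; 47790019; 58202889; 70997475; 86746622; 106151808; 130096835; 159668495;
  196245138; 241537241; 297659111]%Z.

Lemma blocks_ok_below_2_28 : blocks_ok 1768 block_ends (2 ^ 28 - 1) = true.
Proof. vm_compute; reflexivity. Qed.

Definition has_divisor (p : Z) : bool :=
  existsb (fun d => (p mod Z.of_nat d =? 0)%Z) (seq 2 (Z.to_nat p - 2)).

Lemma has_divisor_not_prime p : has_divisor p = true -> ~ prime p.
Proof.
  intros hdiv hp; apply existsb_exists in hdiv as [d [hd hmod]].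
  apply in_seq in hd; apply Z.eqb_eq in hmod.
  apply prime_alt in hp as [hp1 hp]; apply (hp (Z.of_nat d)); [lia|].
  apply Z.mod_divide; lia.
Qed.

Lemma ln_le_log2_up p : (1 <= p)%nat -> ln (INR p) <= IZR (Z.log2_up (Z.of_nat p)) * ln 2.
Proof.
  intros hp; set (L := Z.log2_up (Z.of_nat p)).
  assert (hL : (0 <= L)%Z) by apply Z.log2_up_nonneg.
  assert (hpow : (Z.of_nat p <= 2 ^ L)%Z).
  { destruct (Nat.eq_dec p 1) as [->|]; [pose proof (Z.pow_pos_nonneg 2 L ltac:(lia) hL); lia|].
    apply Z.log2_up_spec; lia. }
  rewrite <- (Z2Nat.id L) by lia; rewrite <- INR_IZR_INZ, <- ln_pow by lra.
  apply ln_le_compat; [apply lt_0_INR; lia|].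
  rewrite INR_IZR_INZ, pow_IZR, Z2Nat.id by lia; apply IZR_le, hpow.
Qed.

Definition B_R_term_Z (n p : Z) : Z :=
  if ((p <? 2)%Z || has_divisor p)%bool then 0
  else ceil_div ((n - 1) * digit_sum_Z 64 p n * Z.log2_up p * 6935) (10000 * (p - 1)).

Lemma B_R_term_le_Z n p : (2 <= n)%nat -> (Z.of_nat n < 2 ^ 64)%Z -> (p * p <= n)%nat ->
  B_R_term n p <= IZR (B_R_term_Z (Z.of_nat n) (Z.of_nat p)).
Proof.
  intros hn hn64 hpn.
  unfold B_R_term; rewrite (proj2 (Z.leb_le _ _)) by lia.
  unfold B_R_term_Z; destruct (Z.ltb_spec (Z.of_nat p) 2) as [hp|hp]; cbn [orb].
  { destruct prime_dec as [hpr|]; [pose proof (prime_ge_2 _ hpr); lia|lra]. }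
  rewrite digit_sum_Z_spec by lia.
  assert (hceil : (0 < 10000 * (Z.of_nat p - 1))%Z) by lia.
  pose proof (Z.log2_up_nonneg (Z.of_nat p)).
  destruct (has_divisor (Z.of_nat p)) eqn:hdiv.
  { destruct prime_dec as [hpr|]; [now apply has_divisor_not_prime in hpr|lra]. }
  destruct prime_dec as [hpr|]; [|apply IZR_le, Z.div_pos; nia].
  eapply Rle_trans; [|apply ceil_div_ge; lia].
  rewrite !mult_IZR, !minus_IZR, <- !INR_IZR_INZ.
  pose proof (ln_le_log2_up p ltac:(lia)); pose proof ln2_le.
  set (L := IZR (Z.log2_up (Z.of_nat p))) in *.
  assert (hlnp : ln (INR p) <= L * (6935 / 10000))
    by (assert (0 <= L) by (apply IZR_le; lia); nra).
  assert (2 <= INR p) by (apply (le_INR 2); lia).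
  assert (2 <= INR n) by (apply (le_INR 2); lia).
  pose proof (pos_INR (digit_sum p n)).
  replace ((INR n - 1) * INR (digit_sum p n) * L * 6935 / (10000 * (INR p - 1)))
    with ((INR n - 1) / (INR p - 1) * INR (digit_sum p n) * (L * (6935 / 10000)))
    by (field; lra).
  apply Rmult_le_compat_l; [|exact hlnp].
  apply Rmult_le_pos; [apply Rdiv_nonneg|]; lra.
Qed.

Definition small_ok (n : Z) : bool :=
  (100 * sum_upto_sqrt_Z (B_R_term_Z n) n <=? 4 * n * Z.sqrt (10000 * n))%Z.

Lemma B_R_le_of_small_ok n : (2 <= n)%nat -> (Z.of_nat n < 2 ^ 64)%Z ->
  small_ok (Z.of_nat n) = true -> B_R n <= 4 * (INR n * sqrt (INR n)).
Proof.
  intros hn hn64 hok; apply Z.leb_le, IZR_le in hok.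
  rewrite !mult_IZR, IZR_sum_upto_sqrt_Z, <- INR_IZR_INZ in hok.
  assert (hB : B_R n = sum_f_R0 (B_R_term n) (Nat.sqrt n)).
  { apply sum_f_R0_vanishing_tail; [apply Nat.sqrt_le_lin|].
    intros p hp; pose proof (lt_sq_of_sqrt_lt n p ltac:(lia)).
    unfold B_R_term; rewrite (proj2 (Z.leb_gt _ _)) by lia; reflexivity. }
  rewrite hB; eapply Rle_trans.
  - apply sum_Rle; intros p hp; apply B_R_term_le_Z; try assumption.
    pose proof (Nat.sqrt_spec n ltac:(lia)) as [hs _]; nia.
  - pose proof (Zsqrt_scaled_le n); pose proof (pos_INR n).
    apply Rle_trans with (4 * (INR n * (IZR (Z.sqrt (10000 * Z.of_nat n)) / 100))); [lra|].
    apply Rmult_le_compat_l; [lra|]; apply Rmult_le_compat_l; lra.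
Qed.

Lemma small_ok_below_1768 : forallb (fun n => small_ok (Z.of_nat n)) (seq 2 1766) = true.
Proof. vm_compute; reflexivity. Qed.

Theorem lemma2p1 (n : nat) (hn : (2 <= n)%nat) :
  B_R n <= 4 * Rpower (INR n) (3 / 2).
Proof.
  rewrite Rpower_3_2 by (apply lt_0_INR; lia).
  destruct (Nat.lt_ge_cases n 1768) as [h_small|h_not_small].
  - apply B_R_le_of_small_ok; [exact hn|lia|].
    apply (proj1 (forallb_forall _ _) small_ok_below_1768), in_seq; lia.
  - destruct (Z.lt_ge_cases (Z.of_nat n) (2 ^ 28)) as [h_medium|h_large].
    + apply (B_R_le_of_blocks_ok block_ends 1768 (2 ^ 28 - 1)); [exact blocks_ok_below_2_28|lia].
    + apply B_R_le_large, h_large.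
Qed.
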